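(* Let $q$ be a prime power and $\mathcal{L}$ a non-empty set of lines of $\mathrm{PG}(n,q)$ satisfying (Pt), (Pl), (Sd) and (To) (see context). Let $M$ be a $4$-dimensional subspace of $\mathrm{PG}(n,q)$ and let $P$ be a $(q+1)$-$M$-point. Then one of the following holds: (a) every line through $P$ in the plane $\pi_P$ contains exactly one $(q+1)$-$M$-point other than $P$; (b) there exists a line through $P$ in $\pi_P$ containing no $(q+1)$-$M$-point other than $P$.
   Context: (Pt): every point of $\mathrm{PG}(n,q)$ lies on $0$ or $q+1$ lines of $\mathcal{L}$. (Pl): every plane contains $0$, $1$ or $q+1$ lines of $\mathcal{L}$. (Sd): every solid ($3$-dimensional subspace) contains $0$, $1$, $q+1$ or $2q+1$ lines of $\mathcal{L}$. (To): $|\mathcal{L}|\le q^5+q^4+q^3+q^2+q+1$. A point $X$ is a $(q+1)$-$M$-point if exactly $q+1$ lines of $\mathcal{L}$ pass through $X$ and are contained in $M$. For a point $P$ lying on lines of $\mathcal{L}$, $\pi_P$ denotes the subspace spanned by the $q+1$ lines of $\mathcal{L}$ through $P$ (under these hypotheses this is a plane). *)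

(* PG(n,q) is modelled as the lattice of subspaces of the
   vector space 'rV[F]_(n.+1) over a finite field F with q = #|F|.
   Projective dimension d <-> vector dimension d+1:
   points: \dim = 1, lines: 2, planes: 3, solids: 4, 4-dim subspaces: 5. *)
From HB Require Import structures.
From mathcomp Require Import all_boot all_algebra.
Set Implicit Arguments. Unset Strict Implicit. Unset Printing Implicit Defensive.

Section PG.
Variables (F : fieldType) (vT : vectType F).

(* The line set L is a duplicate-free list of subspaces. *)

Definition nlines_in (L : seq {vspace vT}) (U : {vspace vT}) : nat :=
  count (fun l => (l <= U)%VS) L.

Definition nlines_through (L : seq {vspace vT}) (X : {vspace vT}) : nat :=
  count (fun l => (X <= l)%VS) L.

Definition qM_point (q : nat) (L : seq {vspace vT}) (M X : {vspace vT}) : Prop :=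
  \dim X = 1%N /\ count (fun l => (X <= l)%VS && (l <= M)%VS) L = q.+1.

(* pi_P: the subspace spanned by the lines of L through P *)
Definition span_lines_through (L : seq {vspace vT}) (P : {vspace vT}) : {vspace vT} :=
  (\sum_(l <- L | (P <= l)%VS) l)%VS.

End PG.

(* The q+1 lines through a point Z lying on lines of L span a plane pi_Z
   containing exactly q+1 lines of L, all of them through Z: three distinct
   such planes cannot lie in a common solid, since they would put at least
   3(q+1) - 3 > 2q+1 lines into it.  If P is a (q+1)-M-point, the lines through
   P lie in M, so pi_P <= M, and so does pi_W for every (q+1)-M-point W.
   Assume every line through P in pi_P carries a (q+1)-M-point other than P,
   and pick one, W_m, on each of the q lines m through P in pi_P other than a
   given line l.  If l carried two such points X and Y, the q+2 solids
   pi_P + pi_W, for W among X, Y and the W_m, would be pairwise distinct solids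
   of the 4-space M through the plane pi_P; but there are only q+1 of them. *)

From HB Require Import structures.
From mathcomp Require Import all_boot all_algebra finfield zify.
From Stdlib Require Import Classical.
Set Implicit Arguments. Unset Strict Implicit. Unset Printing Implicit Defensive.

Section Subspaces.
Variables (F : fieldType) (vT : vectType F).
Implicit Types C U V : {vspace vT}.

Lemma subv_dim_eq U V : (U <= V)%VS -> \dim V <= \dim U -> U = V.
Proof. by move=> sUV dVU; apply/eqP; rewrite eqEdim sUV. Qed.

Lemma dimv_cap_lt U V : \dim U = \dim V -> U != V -> \dim (U :&: V) < \dim U.
Proof.
move=> dUV; apply: contraR; rewrite -leqNgt => le_dU_cap.
have capU : (U :&: V)%VS = U by apply: subv_dim_eq; rewrite ?capvSl.
by apply/eqP/subv_dim_eq; rewrite ?dUV // -capU capvSr.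
Qed.

Lemma capv_covers C U V :
  (C <= U)%VS -> (C <= V)%VS -> \dim U = (\dim C).+1 -> \dim V = (\dim C).+1 ->
  U != V -> (U :&: V = C)%VS.
Proof.
move=> sCU sCV dU dV /(dimv_cap_lt (etrans dU (esym dV))); rewrite dU ltnS => le_cap.
by apply/esym/subv_dim_eq; rewrite ?subv_cap ?sCU.
Qed.

Lemma dimv_add_covers C U V :
  (C <= U)%VS -> (C <= V)%VS -> \dim U = (\dim C).+1 -> \dim V = (\dim C).+1 ->
  U != V -> \dim (U + V) = (\dim C).+2.
Proof.
move=> sCU sCV dU dV neqUV; have := dimv_sum_cap U V.
by rewrite (capv_covers sCU sCV) // dU dV; lia.
Qed.

Lemma neq_on_concurrent_lines (P k k' W W' : {vspace vT}) :
  \dim P = 1 -> \dim k = 2 -> \dim k' = 2 -> k != k' -> (P <= k)%VS -> (P <= k')%VS ->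
  (W <= k)%VS -> (W' <= k')%VS -> \dim W = 1 -> W != P -> W != W'.
Proof.
move=> dP dk dk' neqkk' Pk Pk' Wk W'k' dW; apply: contra => /eqP eqWW'.
apply/eqP/subv_dim_eq; last by rewrite dP dW.
by rewrite -(capv_covers Pk Pk') ?dP ?dk ?dk' // subv_cap Wk eqWW'.
Qed.

End Subspaces.

Section Counting.
Variable T : eqType.
Implicit Types (a b c : pred T) (s : seq T).

Lemma sub_in_count a b s : {in s, subpred a b} -> count a s <= count b s.
Proof.
move=> sab; rewrite (@eq_in_count _ a (predI a b)) ?sub_count // => [x /andP[] //|x xs].
by apply/idP/andP => [ax|[]//]; split; last exact: sab.
Qed.

Lemma count_sub_eq a b s :
  {in s, subpred a b} -> count b s <= count a s -> {in s, subpred b a}.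
Proof.
move=> sab le_ba x xs bx.
have /allP : all a (filter b s).
  rewrite all_count eqn_leq count_size size_filter count_filter.
  rewrite (@eq_in_count _ (predI a b) a) // => y ys /=.
  by apply/andP/idP => [[] //|ay]; split; last exact: sab.
by apply; rewrite mem_filter bx.
Qed.

Lemma count_gt1P a s :
  uniq s -> reflect (exists x y, [/\ x \in s, y \in s, x != y, a x & a y]) (1 < count a s).
Proof.
move=> us; apply: (iffP idP) => [|[x [y [xs ys neqxy ax ay]]]]; last first.
  rewrite -size_filter; apply: (@uniq_leq_size _ [:: x; y]) => [|z].
    by rewrite /= inE andbT.
  by rewrite !inE => /orP[] /eqP->; rewrite mem_filter ?ax ?ay.
have := filter_uniq a us; have mem_a z : z \in filter a s -> z \in s /\ a z.
  by rewrite mem_filter => /andP[].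
rewrite -size_filter; case: (filter a s) mem_a => [|x [|y t]] //= mem_a.
rewrite inE negb_or => /andP[/andP[neqxy _] _] _.
have [xs ax] := mem_a x (mem_head _ _).
have [ys ay] : y \in s /\ a y by apply: mem_a; rewrite !inE eqxx orbT.
by exists x, y.
Qed.

End Counting.

Lemma seq_choice (T : eqType) (U : Type) (u0 : U) (s : seq T) (R : T -> U -> Prop) :
  {in s, forall x, exists y, R x y} -> exists f : T -> U, {in s, forall x, R x (f x)}.
Proof.
elim: s => [|x s IH] hs; first by exists (fun=> u0).
have [y Rxy] := hs x (mem_head x s).
have [f Rf] : exists f : T -> U, {in s, forall z, R z (f z)}.
  by apply: IH => z zs; apply: hs; rewrite inE zs orbT.
exists (fun z => if z == x then y else f z) => z.
by rewrite inE; case: eqP => [-> //|_ /= zs]; apply: Rf.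
Qed.

Lemma leq_count_union3 (T : Type) (a b c : pred T) s :
  count a s + count b s + count c s <=
  count (fun x => [|| a x, b x | c x]) s + count (fun x => a x && b x) s
    + count (fun x => a x && c x) s + count (fun x => b x && c x) s.
Proof. by elim: s => //= x s IH; case: (a x); case: (b x); case: (c x) => /=; lia. Qed.


Section LineSystem.
Variables (F : fieldType) (vT : vectType F) (L : seq {vspace vT}) (q : nat).
Implicit Types (k l m U E S Z : {vspace vT}).

Hypothesis uniq_L : uniq L.
Hypothesis dim_L : forall l, l \in L -> \dim l = 2.
Hypothesis plane_ax : forall E, \dim E = 3 ->
  [\/ nlines_in L E = 0, nlines_in L E = 1 | nlines_in L E = q.+1].
Hypothesis solid_ax : forall S, \dim S = 4 ->
  [\/ nlines_in L S = 0, nlines_in L S = 1, nlines_in L S = q.+1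
    | nlines_in L S = (2 * q).+1].
Hypothesis q_gt1 : 1 < q.

Local Notation pi Z := (span_lines_through L Z).

Lemma nlines_in_le1 U : \dim U <= 2 -> nlines_in L U <= 1.
Proof.
move=> dU; rewrite /nlines_in (@eq_in_count _ _ (pred1 U)).
  by rewrite count_uniq_mem ?leq_b1.
move=> l lL /=; apply/idP/eqP => [sUl|->]; last exact: subvv.
by apply: subv_dim_eq; rewrite // (dim_L lL).
Qed.

Lemma nlines_in_both_planes_le1 E E' :
  \dim E = 3 -> \dim E' = 3 -> E != E' -> count (fun l => (l <= E) && (l <= E'))%VS L <= 1.
Proof.
move=> dE dE' neqEE'; apply: leq_trans (nlines_in_le1 (U := (E :&: E')%VS) _).
  by apply: sub_count => l /=; rewrite subv_cap.
by have := dimv_cap_lt (etrans dE (esym dE')) neqEE'; rewrite dE.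
Qed.

Lemma nlines_in_plane E l1 l2 :
  \dim E = 3 -> l1 \in L -> l2 \in L -> l1 != l2 -> (l1 <= E)%VS -> (l2 <= E)%VS ->
  nlines_in L E = q.+1.
Proof.
move=> dE l1L l2L neq12 l1E l2E.
have /(count_gt1P _ uniq_L) : exists l l', [/\ l \in L, l' \in L, l != l', l <= E & l' <= E]%VS.
  by exists l1, l2.
by case: (plane_ax dE); rewrite /nlines_in => ->.
Qed.

Lemma no_three_rich_planes_in_solid A B C S :
  \dim A = 3 -> \dim B = 3 -> \dim C = 3 -> \dim S = 4 ->
  nlines_in L A = q.+1 -> nlines_in L B = q.+1 -> nlines_in L C = q.+1 ->
  A != B -> A != C -> B != C -> (A <= S)%VS -> (B <= S)%VS -> (C <= S)%VS -> False.
Proof.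
move=> dA dB dC dS cA cB cC neqAB neqAC neqBC sAS sBS sCS.
have cABC : count (fun l => [|| l <= A, l <= B | l <= C])%VS L <= nlines_in L S.
  by apply: sub_count => l /or3P[] /subv_trans->.
have := leq_count_union3 (fun l => l <= A)%VS (fun l => l <= B)%VS (fun l => l <= C)%VS L.
have := nlines_in_both_planes_le1 dA dB neqAB; have := nlines_in_both_planes_le1 dA dC neqAC.
have := nlines_in_both_planes_le1 dB dC neqBC.
move: cA cB cC cABC; rewrite /nlines_in => -> -> ->.
by case: (solid_ax dS); rewrite /nlines_in => ->; lia.
Qed.

Lemma concurrent_lines_coplanar Z l1 l2 l3 :
  \dim Z = 1 -> l1 \in L -> l2 \in L -> l3 \in L ->
  l1 != l2 -> l1 != l3 -> l2 != l3 ->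
  (Z <= l1)%VS -> (Z <= l2)%VS -> (Z <= l3)%VS -> (l3 <= l1 + l2)%VS.
Proof.
move=> dZ l1L l2L l3L neq12 neq13 neq23 Zl1 Zl2 Zl3; apply: contraT => l3_out.
have dim_plane k k' : k \in L -> k' \in L -> k != k' -> (Z <= k)%VS -> (Z <= k')%VS ->
    \dim (k + k') = 3.
  by move=> kL k'L ? ? ?; rewrite (dimv_add_covers (C := Z)) ?dZ ?dim_L.
have dA := dim_plane _ _ l1L l2L neq12 Zl1 Zl2.
have dB := dim_plane _ _ l1L l3L neq13 Zl1 Zl3.
have dC := dim_plane _ _ l2L l3L neq23 Zl2 Zl3.
have neqAB : (l1 + l2)%VS != (l1 + l3)%VS.
  by apply: contra l3_out => /eqP->; rewrite addvSr.
have neqAC : (l1 + l2)%VS != (l2 + l3)%VS.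
  by apply: contra l3_out => /eqP->; rewrite addvSr.
have neqBC : (l1 + l3)%VS != (l2 + l3)%VS.
  apply: contra neqAB => /eqP eqBC; apply/eqP/subv_dim_eq; last by rewrite dA dB.
  by rewrite subv_add addvSl eqBC addvSl.
have dS : \dim (l1 + l2 + (l1 + l3)) = 4.
  by rewrite (dimv_add_covers (C := l1)) ?addvSl ?dA ?dB ?(dim_L l1L).
exfalso; apply: (no_three_rich_planes_in_solid dA dB dC dS _ _ _ neqAB neqAC neqBC).
- exact: nlines_in_plane dA l1L l2L neq12 (addvSl _ _) (addvSr _ _).
- exact: nlines_in_plane dB l1L l3L neq13 (addvSl _ _) (addvSr _ _).
- exact: nlines_in_plane dC l2L l3L neq23 (addvSl _ _) (addvSr _ _).
- exact: addvSl.
- exact: addvSr.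
- rewrite subv_add (subv_trans (addvSr l1 l2)) ?addvSl //.
  by rewrite (subv_trans (addvSr l1 l3)) ?addvSr.
Qed.

Lemma subv_span_lines_throughP Z U :
  reflect {in L, forall l, (Z <= l)%VS -> (l <= U)%VS} (pi Z <= U)%VS.
Proof.
apply: (iffP idP) => [sU l lL Zl | sLU].
  by apply: subv_trans sU; rewrite /span_lines_through (big_rem l lL) Zl addvSl.
rewrite /span_lines_through big_seq_cond.
elim/big_ind: _ => [|V W sVU sWU|l /andP[lL Zl]]; first exact: sub0v.
  by rewrite subv_add sVU.
exact: sLU.
Qed.

Lemma sub_span_lines_through Z l : l \in L -> (Z <= l)%VS -> (l <= pi Z)%VS.
Proof. by move: l; apply/subv_span_lines_throughP. Qed.

Lemma span_lines_through_concurrent Z l1 l2 :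
  \dim Z = 1 -> l1 \in L -> l2 \in L -> l1 != l2 -> (Z <= l1)%VS -> (Z <= l2)%VS ->
  pi Z = (l1 + l2)%VS.
Proof.
move=> dZ l1L l2L neq12 Zl1 Zl2; apply/subv_anti/andP; split.
  apply/subv_span_lines_throughP => l lL Zl.
  have [->|neq1] := eqVneq l l1; first exact: addvSl.
  have [->|neq2] := eqVneq l l2; first exact: addvSr.
  by apply: (concurrent_lines_coplanar dZ) => //; rewrite eq_sym.
by rewrite subv_add !sub_span_lines_through.
Qed.

Lemma rich_point_plane Z :
  \dim Z = 1 -> nlines_through L Z = q.+1 ->
  [/\ \dim (pi Z) = 3, nlines_in L (pi Z) = q.+1
     & {in L, forall l, (l <= pi Z)%VS -> (Z <= l)%VS}].
Proof.
move=> dZ cZ.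
have /(count_gt1P _ uniq_L) [l1 [l2 [l1L l2L neq12 Zl1 Zl2]]] : 1 < nlines_through L Z.
  by rewrite cZ ltnS ltnW.
have pi_Z := span_lines_through_concurrent dZ l1L l2L neq12 Zl1 Zl2.
have d3 : \dim (pi Z) = 3 by rewrite pi_Z (dimv_add_covers (C := Z)) ?dZ ?dim_L.
have c3 : nlines_in L (pi Z) = q.+1.
  by apply: (nlines_in_plane d3 l1L l2L); rewrite // pi_Z ?addvSl ?addvSr.
split=> //; apply: count_sub_eq => [l lL /= Zl|]; first exact: sub_span_lines_through.
by rewrite -/(nlines_in L _) c3 -/(nlines_through L Z) cZ.
Qed.

Lemma span_lines_through_inj Z Z' :
  \dim Z = 1 -> \dim Z' = 1 -> Z != Z' ->
  nlines_through L Z = q.+1 -> nlines_through L Z' = q.+1 -> pi Z != pi Z'.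
Proof.
move=> dZ dZ' neqZZ' cZ cZ'; apply/eqP => eq_pi.
have [_ _ Z'_on] := rich_point_plane dZ' cZ'.
have dZZ' : \dim (Z + Z') = 2 by rewrite (dimv_add_covers (C := 0%VS)) ?sub0v ?dimv0.
have : nlines_through L Z <= nlines_in L (Z + Z').
  apply: sub_in_count => l lL /= Zl.
  have sZZ'l : (Z + Z' <= l)%VS.
    by rewrite subv_add Zl Z'_on // -eq_pi sub_span_lines_through.
  by rewrite (@subv_dim_eq _ _ _ _ sZZ'l) ?dZZ' ?dim_L.
by have := nlines_in_le1 (eq_leq dZZ'); rewrite cZ; lia.
Qed.

Lemma dimv_add_span_lines_through P W k :
  \dim P = 1 -> \dim W = 1 -> P != W ->
  nlines_through L P = q.+1 -> nlines_through L W = q.+1 ->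
  k \in L -> (P <= k)%VS -> (W <= k)%VS -> \dim (pi P + pi W) = 4.
Proof.
move=> dP dW neqPW cP cW kL Pk Wk.
have [dpiP _ _] := rich_point_plane dP cP; have [dpiW _ _] := rich_point_plane dW cW.
by rewrite (dimv_add_covers (C := k)) ?sub_span_lines_through ?span_lines_through_inj
  ?dpiP ?dpiW ?(dim_L kL).
Qed.

Lemma add_span_lines_through_inj P W W' k :
  \dim P = 1 -> \dim W = 1 -> \dim W' = 1 -> P != W -> P != W' -> W != W' ->
  nlines_through L P = q.+1 -> nlines_through L W = q.+1 -> nlines_through L W' = q.+1 ->
  k \in L -> (P <= k)%VS -> (W <= k)%VS -> (pi P + pi W)%VS != (pi P + pi W')%VS.
Proof.
move=> dP dW dW' neqPW neqPW' neqWW' cP cW cW' kL Pk Wk; apply/eqP => eqS.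
have [dpiP cpiP _] := rich_point_plane dP cP; have [dpiW cpiW _] := rich_point_plane dW cW.
have [dpiW' cpiW' _] := rich_point_plane dW' cW'.
apply: (no_three_rich_planes_in_solid dpiP dpiW dpiW'
          (dimv_add_span_lines_through dP dW neqPW cP cW kL Pk Wk) cpiP cpiW cpiW');
  by rewrite ?span_lines_through_inj ?addvSl ?addvSr // eqS addvSr.
Qed.

Hypothesis point_ax : forall X, \dim X = 1 ->
  nlines_through L X = 0 \/ nlines_through L X = q.+1.

Lemma qM_point_rich M Z :
  qM_point q L M Z -> nlines_through L Z = q.+1 /\ (pi Z <= M)%VS.
Proof.
case=> dZ cZM.
have cZ : nlines_through L Z = q.+1.
  have : count (fun l => (Z <= l) && (l <= M))%VS L <= nlines_through L Z.
    by apply: sub_count => l /andP[].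
  by case: (point_ax dZ) => ->; rewrite cZM.
split=> //; apply/subv_span_lines_throughP => l lL Zl.
have sub_in_M : {in L, subpred (fun l => (Z <= l)%VS) (fun l => (Z <= l) && (l <= M))%VS}.
  by apply: count_sub_eq => [k _ /andP[] | ]; rewrite ?cZM -/(nlines_through L Z) ?cZ.
by case/andP: (sub_in_M l lL Zl).
Qed.

End LineSystem.

Section FiniteSpace.
Variables (F : finFieldType) (n : nat).
Implicit Types (C U W : {vspace 'rV[F]_n}).

Lemma card_vspaceD C U :
  (C <= U)%VS -> #|[predD U & C]| = #|F| ^ \dim U - #|F| ^ \dim C.
Proof.
move=> sCU; rewrite -!card_vspace -(cardID C U).
have -> : #|[predI U & C]| = #|C|.
  by apply: eq_card => x; rewrite !inE andb_idl // => /(subvP sCU).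
by rewrite addKn.
Qed.

Lemma size_covers_le C W (s : seq {vspace 'rV[F]_n}) :
  (C <= W)%VS -> \dim W = (\dim C).+2 -> uniq s ->
  {in s, forall U, [/\ (C <= U)%VS, (U <= W)%VS & \dim U = (\dim C).+1]} ->
  size s <= #|F|.+1.
Proof.
move=> sCW dW us hs; set q := #|F|; have q_gt1 : 1 < q := finNzRing_gt1 F.
(* The sets [U :\: C], for [U] in [s], are pairwise disjoint subsets of [W :\: C]. *)
have count_le x : count (fun U => x \in [predD U & C]) s <= (x \in [predD W & C]).
  have [/hasP[U Us xU]|] := boolP (has (fun U => x \in [predD U & C]) s); last first.
    by rewrite has_count lt0n negbK => /eqP->.
  have [sCU sUW dU] := hs U Us.
  move: (xU); rewrite !inE => /andP[xC /(subvP sUW)->]; rewrite xC.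
  rewrite (@eq_in_count _ _ (pred1 U)) ?count_uniq_mem ?leq_b1 // => V Vs /=.
  apply/idP/eqP => [xV|->//]; apply: contraTeq xC => neqVU.
  have [sCV _ dV] := hs V Vs; move: xU xV; rewrite !inE => /andP[_ xU] /andP[_ xV].
  by rewrite negbK -(capv_covers sCV sCU) // memv_cap xV.
have : \sum_(U <- s) #|[predD U & C]| <= #|[predD W & C]|.
  rewrite -[#|[predD W & C]|]sum1_card [X in _ <= X]big_mkcond /=.
  under eq_bigr do rewrite -sum1_card big_mkcond /=.
  rewrite exchange_big /=; apply: leq_sum => x _.
  by apply: leq_trans (count_le x); rewrite -sum1_count [X in _ <= X]big_mkcond.
rewrite (eq_big_seq (fun=> q ^ (\dim C).+1 - q ^ \dim C)) => [|U /hs[sCU _ dU]]; last first.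
  by rewrite card_vspaceD ?dU.
rewrite big_const_seq count_predT iter_addn_0 card_vspaceD ?dW //.
rewrite -/q !expnS; have : 0 < q ^ \dim C by rewrite expn_gt0 ltnW.
move: (q ^ _) => a a_gt0.
have -> : q * (q * a) - a = (q * a - a) * q.+1.
  by rewrite mulnBl mulnS; nia.
by rewrite leq_pmul2l // subn_gt0 -{1}[a]mul1n ltn_pmul2r.
Qed.

End FiniteSpace.

Section FiniteLineSystem.
Variables (F : finFieldType) (n : nat) (L : seq {vspace 'rV[F]_n}).
Local Notation q := #|F|.
Implicit Types (k l m M P W X Y : {vspace 'rV[F]_n}).

Hypothesis uniq_L : uniq L.
Hypothesis dim_L : forall l, l \in L -> \dim l = 2.
Hypothesis point_ax : forall X, \dim X = 1 ->
  nlines_through L X = 0 \/ nlines_through L X = q.+1.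
Hypothesis plane_ax : forall E, \dim E = 3 ->
  [\/ nlines_in L E = 0, nlines_in L E = 1 | nlines_in L E = q.+1].
Hypothesis solid_ax : forall S, \dim S = 4 ->
  [\/ nlines_in L S = 0, nlines_in L S = 1, nlines_in L S = q.+1
    | nlines_in L S = (2 * q).+1].

Local Notation pi Z := (span_lines_through L Z).
Let q_gt1 : 1 < q := finNzRing_gt1 F.
Let rich_plane := rich_point_plane uniq_L dim_L plane_ax solid_ax q_gt1.

Lemma lines_through_span_in_L P l :
  \dim P = 1 -> nlines_through L P = q.+1 ->
  \dim l = 2 -> (P <= l)%VS -> (l <= pi P)%VS -> l \in L.
Proof.
move=> dP cP dl Pl lpi; apply: contraT => lnL.
have [dpi _ _] := rich_plane dP cP.
have := @size_covers_le _ _ P (pi P) (l :: [seq m <- L | P <= m]%VS).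
rewrite /= size_filter -/(nlines_through L P) cP ltnn; apply.
- exact: subv_trans lpi.
- by rewrite dpi dP.
- by rewrite mem_filter negb_and lnL orbT filter_uniq.
move=> m; rewrite inE mem_filter => /predU1P[->|/andP[Pm mL]].
  by rewrite dl dP.
by rewrite Pm sub_span_lines_through ?(dim_L mL) ?dP.
Qed.

Lemma size_qM_points_on_lines_le M P ws :
  \dim M = 5 -> qM_point q L M P -> uniq ws ->
  {in ws, forall W, [/\ qM_point q L M W, W != P
                      & exists2 k, k \in L & (P <= k) && (W <= k)]%VS} ->
  size ws <= q.+1.
Proof.
move=> dM hP uniq_ws on_line.
have [cP piPM] := qM_point_rich point_ax hP; have [dpiP _ _] := rich_plane hP.1 cP.
have uniq_solids : uniq (map (fun W => pi P + pi W)%VS ws).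
  rewrite map_inj_in_uniq // => W W' Wws W'ws /eqP; apply: contraTeq => neqWW'.
  have [hW nWP [k kL /andP[Pk Wk]]] := on_line W Wws; have [hW' nW'P _] := on_line W' W'ws.
  have [cW _] := qM_point_rich point_ax hW; have [cW' _] := qM_point_rich point_ax hW'.
  rewrite eq_sym in nWP; rewrite eq_sym in nW'P.
  exact: (add_span_lines_through_inj uniq_L dim_L plane_ax solid_ax q_gt1
            hP.1 hW.1 hW'.1 nWP nW'P neqWW' cP cW cW' kL Pk Wk).
rewrite -(size_map (fun W => pi P + pi W)%VS).
apply: (size_covers_le piPM _ uniq_solids); first by rewrite dM dpiP.
move=> _ /mapP[W Wws ->]; have [hW nWP [k kL /andP[Pk Wk]]] := on_line W Wws.
have [cW piWM] := qM_point_rich point_ax hW; rewrite eq_sym in nWP.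
rewrite addvSl subv_add piPM piWM dpiP.
by rewrite (dimv_add_span_lines_through uniq_L dim_L plane_ax solid_ax q_gt1
  hP.1 hW.1 nWP cP cW kL).
Qed.

Lemma qM_points_on_line_unique M P l X Y :
  \dim M = 5 -> qM_point q L M P ->
  (forall m, \dim m = 2 -> (P <= m)%VS -> (m <= pi P)%VS ->
     exists W, [/\ (W <= m)%VS, qM_point q L M W & W != P]) ->
  \dim l = 2 -> (P <= l)%VS -> (l <= pi P)%VS ->
  (X <= l)%VS -> (Y <= l)%VS -> qM_point q L M X -> qM_point q L M Y ->
  X != P -> Y != P -> X = Y.
Proof.
move=> dM hP hex dl Pl lpi Xl Yl hX hY nXP nYP; apply: contraTeq isT => neqXY.
have [cP _] := qM_point_rich point_ax hP.
have lL := lines_through_span_in_L hP.1 cP dl Pl lpi.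
have uniq_LP : uniq [seq m <- L | P <= m]%VS by rewrite filter_uniq.
have l_LP : l \in [seq m <- L | P <= m]%VS by rewrite mem_filter Pl lL.
set LP := rem l [seq m <- L | P <= m]%VS.
have mem_LP m : m \in LP -> [/\ m \in L, (P <= m)%VS & m != l].
  by rewrite mem_rem_uniq // !inE mem_filter => /and3P[].
have [f hf] : exists f, {in LP, forall m, [/\ (f m <= m)%VS, qM_point q L M (f m) & f m != P]}.
  apply: (seq_choice 0%VS (R := fun m W => [/\ W <= m, qM_point q L M W & W != P]%VS)).
  move=> m /mem_LP[mL Pm _].
  exact: hex (dim_L mL) Pm (sub_span_lines_through mL Pm).
have notin_fLP Z : (Z <= l)%VS -> \dim Z = 1 -> Z != P -> Z \notin map f LP.
  move=> Zl dZ nZP; apply/mapP => -[m /[dup] mLP /mem_LP[mL Pm neqml] eqZ].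
  have [fm _ _] := hf m mLP; rewrite eq_sym in neqml.
  have := neq_on_concurrent_lines hP.1 dl (dim_L mL) neqml Pl Pm Zl fm dZ nZP.
  by rewrite eqZ eqxx.
have uniq_fLP : uniq (map f LP).
  rewrite map_inj_in_uniq ?rem_uniq // => m m' mLP m'LP /eqP; apply: contraTeq => neqmm'.
  have [mL Pm _] := mem_LP m mLP; have [m'L Pm' _] := mem_LP m' m'LP.
  have [fm [dfm _] nfm] := hf m mLP; have [fm' _ _] := hf m' m'LP.
  exact: neq_on_concurrent_lines hP.1 (dim_L mL) (dim_L m'L) neqmm' Pm Pm' fm fm' dfm nfm.
have := @size_qM_points_on_lines_le M P [:: X, Y & map f LP] dM hP.
rewrite /= size_map size_rem // size_filter -/(nlines_through L P) cP ltnn.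
apply; first by rewrite inE negb_or neqXY !notin_fLP ?hX.1 ?hY.1.
move=> W; rewrite !inE => /or3P[/eqP->|/eqP->|/mapP[m /[dup] mLP /mem_LP[mL Pm _] ->]].
- by split=> //; exists l; rewrite ?Pl.
- by split=> //; exists l; rewrite ?Pl.
- by have [fm hfm nfm] := hf m mLP; split=> //; exists m; rewrite ?Pm.
Qed.

End FiniteLineSystem.

Unset Implicit Arguments. Set Strict Implicit. Set Printing Implicit Defensive.

Theorem corollary1 (F : finFieldType) (n : nat)
    (L : seq {vspace 'rV[F]_(n.+1)}) :
  let q := #|F| in
  uniq L ->
  L != [::] ->
  (forall l, l \in L -> \dim l = 2%N) ->
  (* (Pt) *)
  (forall X : {vspace 'rV[F]_(n.+1)}, \dim X = 1%N ->
     nlines_through L X = 0%N \/ nlines_through L X = q.+1) ->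
  (* (Pl) *)
  (forall E : {vspace 'rV[F]_(n.+1)}, \dim E = 3%N ->
     [\/ nlines_in L E = 0%N, nlines_in L E = 1%N | nlines_in L E = q.+1]) ->
  (* (Sd) *)
  (forall S : {vspace 'rV[F]_(n.+1)}, \dim S = 4%N ->
     [\/ nlines_in L S = 0%N, nlines_in L S = 1%N, nlines_in L S = q.+1
       | nlines_in L S = (2 * q).+1]) ->
  (* (To) *)
  (size L <= q ^ 5 + q ^ 4 + q ^ 3 + q ^ 2 + q + 1)%N ->
  forall M P : {vspace 'rV[F]_(n.+1)},
  \dim M = 5%N ->
  qM_point q L M P ->
  (* (a) *)
  (forall l : {vspace 'rV[F]_(n.+1)}, \dim l = 2%N ->
     (P <= l)%VS -> (l <= span_lines_through L P)%VS ->
     exists X, [/\ X <> P, (X <= l)%VS, qM_point q L M X &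
       forall Y, Y <> P -> (Y <= l)%VS -> qM_point q L M Y -> Y = X])
  \/
  (* (b) *)
  (exists l : {vspace 'rV[F]_(n.+1)}, [/\ \dim l = 2%N, (P <= l)%VS,
     (l <= span_lines_through L P)%VS &
     forall X, (X <= l)%VS -> qM_point q L M X -> X = P]).
Proof.
move=> q uniq_L _ dim_L point_ax plane_ax solid_ax _ M P dM hP.
have [b|no_b] := classic (exists l : {vspace 'rV[F]_(n.+1)}, [/\ \dim l = 2, (P <= l)%VS,
  (l <= span_lines_through L P)%VS & forall X, (X <= l)%VS -> qM_point q L M X -> X = P]).
  by right.
left=> l dl Pl lpi.
have on_each_line m : \dim m = 2 -> (P <= m)%VS -> (m <= span_lines_through L P)%VS ->
    exists W, [/\ (W <= m)%VS, qM_point q L M W & W != P].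
  move=> dm Pm mpi; apply: NNPP => noW; apply: no_b; exists m; split=> // X Xm hX.
  by apply: NNPP => /eqP nXP; apply: noW; exists X.
have [X [Xl hX nXP]] := on_each_line l dl Pl lpi.
exists X; split=> //; first exact/eqP.
move=> Y /eqP nYP Yl hY.
exact: (qM_points_on_line_unique uniq_L dim_L point_ax plane_ax solid_ax
          dM hP on_each_line dl Pl lpi Yl Xl hY hX nYP nXP).
Qed.
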